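(* Let $b>0$ and let $\psi(x;a,\sigma)$ be as in the context, with $\psi^{(k)}$ its $k$-th derivative in $x$. For every $k\in\mathbb{N}\cup\{0\}$ and $x\in\mathbb{R}$, $$\frac{\partial}{\partial \sigma}\Big(\frac{\psi^{(k)}(x;a,\sigma)}{\psi^{(k+1)}(x;a,\sigma)}\Big)=\frac{(a-bx)\big[\psi^{(k+1)}(x;a,\sigma)^2-\psi^{(k)}(x;a,\sigma)\psi^{(k+2)}(x;a,\sigma)\big]+b\,\psi^{(k+1)}(x;a,\sigma)\psi^{(k)}(x;a,\sigma)}{b\sigma\,\psi^{(k+1)}(x;a,\sigma)^2}>0.$$
   Context: Constants $b>0$, $\rho>0$; parameters $a\in\mathbb{R}$, $\sigma>0$. For $\beta<0$, $D_\beta(x)=\frac{e^{-x^2/4}}{\Gamma(-\beta)}\int_0^\infty t^{-\beta-1}e^{-t^2/2-xt}dt$, and $\psi(x;a,\sigma)=e^{\frac{(bx-a)^2}{2\sigma^2 b}}D_{-\rho/b}\big(-\frac{bx-a}{\sigma b}\sqrt{2b}\big)$, the positive strictly increasing fundamental solution of $\frac12\sigma^2u''+(a-bx)u'-\rho u=0$. *)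

From Stdlib Require Import Reals.
From Coquelicot Require Import Coquelicot.
Open Scope R_scope.

Definition Gamma_fn (s : R) : R :=
  RInt_gen (fun t => Rpower t (s - 1) * exp (- t)) (at_right 0) (Rbar_locally p_infty).

(* Parabolic cylinder function, integral representation valid for beta < 0:
   D_beta(x) = e^{-x^2/4} / Gamma(-beta) * int_0^oo t^{-beta-1} e^{-t^2/2 - x t} dt. *)
Definition Dpc (beta x : R) : R :=
  exp (- x ^ 2 / 4) / Gamma_fn (- beta) *
  RInt_gen (fun t => Rpower t (- beta - 1) * exp (- t ^ 2 / 2 - x * t))
           (at_right 0) (Rbar_locally p_infty).

Definition psi (b rho : R) (x a sigma : R) : R :=
  exp ((b * x - a) ^ 2 / (2 * sigma ^ 2 * b)) *
  Dpc (- rho / b) (- (b * x - a) / (sigma * b) * sqrt (2 * b)).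

Definition psi_k (b rho : R) (k : nat) (x a sigma : R) : R :=
  Derive_n (fun y => psi b rho y a sigma) k x.

(* Put w = -(b x - a) sqrt(2 b) / (sigma b), the argument of D in psi, and
   K(q, w) = int_0^oo t^(q-1) e^(-t^2/2 - w t) dt.  Then psi = K(nu, w) / Gamma(nu) with
   nu = rho / b, and since d/dw K(q, w) = - K(q+1, w) and dw/dx = - sqrt(2 b) / sigma,
   psi^(k) = (sqrt(2 b) / sigma)^k K(nu + k, w) / Gamma(nu).  So with p = nu + k and
   r = K(p, .) / K(p+1, .), the ratio psi^(k) / psi^(k+1) is sigma r(w) / sqrt(2 b); as w is
   proportional to 1 / sigma, its sigma-derivative is (r - w r')(w) / sqrt(2 b), and both it
   and the claimed formula equal (K0 K1 + w (K1^2 - K0 K2)) / (sqrt(2 b) K1^2), Kj = K(p+j, w).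
   Positivity: by Cauchy-Schwarz q |-> K(q, w) is log-convex, which settles w <= 0.  For w > 0,
   integration by parts gives K(q+2, w) = q K(q, w) - w K(q+1, w), whence
   p (K0 K1 + w (K1^2 - K0 K2)) = w (K1 K3 - K2^2) + K1 K2 > 0 by log-convexity at p + 1. *)

From Stdlib Require Import Reals Lra Psatz Classical.
From Coquelicot Require Import Coquelicot.
Open Scope R_scope.

Lemma exp_le x y : x <= y -> exp x <= exp y.
Proof. intros [H | ->]; [left; apply exp_increasing | right]; auto. Qed.

Lemma ln_le_sub_1 t : 0 < t -> ln t <= t - 1.
Proof. intros Ht. pose proof (exp_ineq1_le (ln t)) as H. rewrite exp_ln in H; lra. Qed.

Lemma Rpower_pos t c : 0 < Rpower t c.
Proof. apply exp_pos. Qed.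

Lemma continuous_Rpower c t : 0 < t -> continuous (fun t => Rpower t c) t.
Proof.
  intros Ht. apply (@ex_derive_continuous R_AbsRing R_NormedModule).
  eexists. apply is_derive_Reals, derivable_pt_lim_power; auto.
Qed.

Lemma Rabs_le_of_between c u : Rmin 0 u <= c <= Rmax 0 u -> Rabs c <= Rabs u.
Proof. unfold Rmin, Rmax; destruct (Rle_dec 0 u); unfold Rabs; repeat destruct Rcase_abs; lra. Qed.

Lemma exp_sub_1_le u : Rabs (exp u - 1) <= Rabs u * exp (Rabs u).
Proof.
  destruct (MVT_abs exp exp 0 u) as [c [Hc Hcu]].
  { intros c _. apply derivable_pt_lim_exp. }
  rewrite exp_0, Rminus_0_r in Hc. rewrite Hc, (Rabs_right (exp c)) by (left; apply exp_pos).
  rewrite Rmult_comm. apply Rmult_le_compat_l; [apply Rabs_pos |].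
  apply exp_le. pose proof (Rabs_le_of_between c u Hcu). pose proof (Rle_abs c). lra.
Qed.

Lemma exp_taylor1_le u : Rabs (exp u - 1 - u) <= u ^ 2 * exp (Rabs u).
Proof.
  destruct (MVT_abs (fun s => exp s - s) (fun s => exp s - 1) 0 u) as [c [Hc Hcu]].
  { intros c _. apply is_derive_Reals. auto_derive; auto; ring. }
  replace (exp u - 1 - u) with (exp u - u - (exp 0 - 0)) by (rewrite exp_0; ring).
  rewrite Hc, Rminus_0_r, <- pow2_abs.
  pose proof (exp_sub_1_le c) as Hc1. pose proof (Rabs_le_of_between c u Hcu) as Hcu'.
  assert (exp (Rabs c) <= exp (Rabs u)) by (apply exp_le; lra).
  pose proof (Rabs_pos c). pose proof (Rabs_pos u). pose proof (exp_pos (Rabs c)).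
  assert (Rabs (exp c - 1) <= Rabs u * exp (Rabs u)) by nra.
  nra.
Qed.

Lemma is_derive_of_quadratic_remainder (F : R -> R) w D C :
  (forall h, Rabs h <= 1 -> Rabs (F (w + h) - F w - h * D) <= h ^ 2 * C) ->
  is_derive F w D.
Proof.
  intros HF. apply is_derive_Reals. intros eps Heps.
  set (C' := Rabs C + 1).
  assert (HC' : 0 < C') by (unfold C'; pose proof (Rabs_pos C); lra).
  assert (Hd : 0 < Rmin 1 (eps / C')) by (apply Rmin_case; [lra | apply Rdiv_lt_0_compat; lra]).
  exists (mkposreal _ Hd). intros h Hh0 Hh. simpl in Hh.
  assert (Hh1 : Rabs h <= 1) by (left; eapply Rlt_le_trans; [apply Hh | apply Rmin_l]).
  assert (Hh2 : Rabs h * C' < eps).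
  { apply (Rmult_lt_reg_r (/ C')); [apply Rinv_0_lt_compat; lra |].
    rewrite Rmult_assoc, Rinv_r, Rmult_1_r by lra.
    eapply Rlt_le_trans; [apply Hh | apply Rmin_r]. }
  assert (Hhabs : 0 < Rabs h) by (apply Rabs_pos_lt; auto).
  replace ((F (w + h) - F w) / h - D) with ((F (w + h) - F w - h * D) / h) by (field; auto).
  unfold Rdiv. rewrite Rabs_mult, Rabs_inv.
  apply (Rmult_lt_reg_r (Rabs h)); auto.
  rewrite Rmult_assoc, Rinv_l, Rmult_1_r by lra.
  pose proof (HF h Hh1). rewrite <- pow2_abs in H.
  assert (C <= C') by (unfold C'; pose proof (Rle_abs C); lra).
  nra.
Qed.

Lemma filterlim_scal_0 {T} (F : (T -> Prop) -> Prop) (f : T -> R) C : Filter F ->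
  filterlim f F (locally 0) -> filterlim (fun t => C * f t) F (locally 0).
Proof.
  intros HF Hf. rewrite <- (Rmult_0_r C).
  apply (filterlim_comp _ _ _ f (fun y => C * y) _ (locally 0)); auto.
  change (continuous (fun y => C * y) 0).
  apply (@ex_derive_continuous R_AbsRing R_NormedModule). auto_derive; auto.
Qed.

Lemma filterlim_Rpower_0 c : 0 < c -> filterlim (fun t => Rpower t c) (at_right 0) (locally 0).
Proof.
  intros Hc. unfold Rpower.
  apply (filterlim_comp _ _ _ (fun t => c * ln t) exp _ (Rbar_locally m_infty)).
  - apply (filterlim_comp _ _ _ ln (fun y => c * y) _ (Rbar_locally m_infty)).
    + apply is_lim_ln_0.
    + intros P [M HM]. exists (M / c). intros y Hy. apply HM.
      apply (Rmult_lt_compat_l c) in Hy; auto.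
      replace (c * (M / c)) with M in Hy by (field; lra). exact Hy.
  - apply is_lim_exp_m.
Qed.

Lemma filterlim_exp_neg_half : filterlim (fun t => exp (- t / 2)) (Rbar_locally p_infty) (locally 0).
Proof.
  apply (filterlim_comp _ _ _ (fun t => - t / 2) exp _ (Rbar_locally m_infty)).
  - intros P [M HM]. exists (- 2 * M). intros t Ht. apply HM. lra.
  - apply is_lim_exp_m.
Qed.

Local Notation is_RInt_0_infty f l := (is_RInt_gen f (at_right 0) (Rbar_locally p_infty) l).
Local Notation RInt_0_infty f := (RInt_gen f (at_right 0) (Rbar_locally p_infty)).

Lemma at_right_0_lt a : 0 < a -> at_right 0 (fun t => 0 < t < a).
Proof.
  intros Ha. apply (locally_interval _ 0 m_infty a); simpl; auto.
Qed.

Lemma eventually_0_lt_le :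
  filter_prod (at_right 0) (Rbar_locally p_infty) (fun ab => 0 < fst ab /\ fst ab <= snd ab).
Proof.
  apply Filter_prod with (fun a => 0 < a < 1) (fun b => 1 < b).
  - apply at_right_0_lt; lra.
  - exists 1; auto.
  - simpl; intros; lra.
Qed.

Lemma RInt_Rpower_le c a : -1 < c -> 0 < a <= 1 -> RInt (fun t => Rpower t c) a 1 <= / (c + 1).
Proof.
  intros Hc Ha.
  set (F t := / (c + 1) * Rpower t (c + 1)).
  assert (HF : is_RInt (fun t => Rpower t c) a 1 (minus (F 1) (F a))).
  { apply (is_RInt_derive F); intros t Ht; rewrite Rmin_left in Ht by lra.
    - unfold F. replace (Rpower t c) with (/ (c + 1) * ((c + 1) * Rpower t (c + 1 - 1))).
      + apply is_derive_scal, is_derive_Reals, derivable_pt_lim_power; lra.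
      + replace (c + 1 - 1) with c by ring. field. lra.
    - apply continuous_Rpower; lra. }
  rewrite (is_RInt_unique _ _ _ _ HF). unfold F, minus, plus, opp; simpl.
  unfold Rpower at 1. rewrite ln_1, Rmult_0_r, exp_0.
  pose proof (Rpower_pos a (c + 1)). pose proof (Rinv_0_lt_compat (c + 1)). nra.
Qed.

Lemma RInt_exp_half_le b : 1 <= b -> RInt (fun t => exp (- t / 2)) 1 b <= 2.
Proof.
  intros Hb.
  set (F t := - 2 * exp (- t / 2)).
  assert (HF : is_RInt (fun t => exp (- t / 2)) 1 b (minus (F b) (F 1))).
  { apply (is_RInt_derive F); intros t _.
    - unfold F. auto_derive; auto. unfold Rdiv. field.
    - apply (@ex_derive_continuous R_AbsRing R_NormedModule). auto_derive; auto. }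
  rewrite (is_RInt_unique _ _ _ _ HF). unfold F, minus, plus, opp; simpl.
  pose proof (exp_le (- (1) / 2) 0 ltac:(lra)) as H1. rewrite exp_0 in H1.
  pose proof (exp_pos (- b / 2)). lra.
Qed.

Section Improper.

Variable f : R -> R.
Hypothesis f_cont : forall t, 0 < t -> continuous f t.
Hypothesis f_ge0 : forall t, 0 < t -> 0 <= f t.

Lemma ex_RInt_pos a b : 0 < a -> 0 < b -> ex_RInt f a b.
Proof.
  intros Ha Hb. apply (@ex_RInt_continuous R_CompleteNormedModule).
  intros t [Ht _]. apply f_cont. revert Ht. apply Rmin_case; lra.
Qed.

Lemma RInt_le_widen a' a b b' : 0 < a' -> a' <= a -> a <= b -> b <= b' ->
  RInt f a b <= RInt f a' b'.
Proof.
  intros Ha' Ha Hab Hb.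
  rewrite <- (RInt_Chasles f a' a b') by (apply ex_RInt_pos; lra).
  rewrite <- (RInt_Chasles f a b b') by (apply ex_RInt_pos; lra).
  assert (0 <= RInt f a' a) by (apply RInt_ge_0; [lra | apply ex_RInt_pos; lra | intros; apply f_ge0; lra]).
  assert (0 <= RInt f b b') by (apply RInt_ge_0; [lra | apply ex_RInt_pos; lra | intros; apply f_ge0; lra]).
  simpl; unfold plus; simpl. lra.
Qed.

Lemma RInt_le_of_dominated C1 C2 c : -1 < c ->
  (forall t, 0 < t <= 1 -> f t <= C1 * Rpower t c) ->
  (forall t, 1 <= t -> f t <= C2 * exp (- t / 2)) ->
  forall a b, 0 < a -> a <= b -> RInt f a b <= C1 / (c + 1) + 2 * C2.
Proof.
  intros Hc Hsmall Hlarge a b Ha Hab.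
  assert (HC1 : 0 <= C1).
  { pose proof (f_ge0 1 Rlt_0_1). pose proof (Hsmall 1 ltac:(lra)) as H1.
    unfold Rpower in H1. rewrite ln_1, Rmult_0_r, exp_0 in H1. lra. }
  assert (HC2 : 0 <= C2).
  { pose proof (f_ge0 1 Rlt_0_1). pose proof (Hlarge 1 ltac:(lra)).
    pose proof (exp_pos (- (1) / 2)). nra. }
  set (a' := Rmin a 1). set (b' := Rmax b 1).
  assert (Ha' : 0 < a' <= 1) by (unfold a'; split; [apply Rmin_case; lra | apply Rmin_r]).
  assert (Hb' : 1 <= b') by apply Rmax_r.
  apply Rle_trans with (RInt f a' 1 + RInt f 1 b').
  { rewrite (RInt_le_widen a' a b b'); [| lra | apply Rmin_l | lra | apply Rmax_l].
    rewrite <- (RInt_Chasles f a' 1 b') by (apply ex_RInt_pos; lra). right; reflexivity. }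
  apply Rplus_le_compat.
  - apply Rle_trans with (RInt (fun t => scal C1 (Rpower t c)) a' 1).
    + apply RInt_le; try lra; [apply ex_RInt_pos; lra | | intros; apply Hsmall; lra].
      apply (@ex_RInt_continuous R_CompleteNormedModule). intros t Ht.
      apply (@continuous_scal_r R_UniformSpace R_AbsRing R_NormedModule).
      apply continuous_Rpower. revert Ht; apply Rmin_case; lra.
    + rewrite (@RInt_scal R_CompleteNormedModule).
      * pose proof (RInt_Rpower_le c a' Hc Ha'). unfold scal; simpl; unfold mult; simpl.
        unfold Rdiv. nra.
      * apply (@ex_RInt_continuous R_CompleteNormedModule). intros t Ht.
        apply continuous_Rpower. revert Ht; apply Rmin_case; lra.
  - apply Rle_trans with (RInt (fun t => scal C2 (exp (- t / 2))) 1 b').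
    + apply RInt_le; try lra; [apply ex_RInt_pos; lra | | intros; apply Hlarge; lra].
      apply (@ex_RInt_continuous R_CompleteNormedModule). intros t _.
      apply (@continuous_scal_r R_UniformSpace R_AbsRing R_NormedModule).
      apply (@ex_derive_continuous R_AbsRing R_NormedModule). auto_derive; auto.
    + rewrite (@RInt_scal R_CompleteNormedModule).
      * pose proof (RInt_exp_half_le b' Hb'). unfold scal; simpl; unfold mult; simpl. nra.
      * apply (@ex_RInt_continuous R_CompleteNormedModule). intros t _.
        apply (@ex_derive_continuous R_AbsRing R_NormedModule). auto_derive; auto.
Qed.

Lemma is_RInt_0_infty_sup B : (forall a b, 0 < a -> a <= b -> RInt f a b <= B) ->
  exists l, is_RInt_0_infty f l /\ forall a b, 0 < a -> a <= b -> RInt f a b <= l.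
Proof.
  intros HB.
  set (E y := exists a b, 0 < a /\ a <= b /\ y = RInt f a b).
  assert (Ebound : bound E) by (exists B; intros y (a & b & Ha & Hab & ->); auto).
  assert (Ene : exists y, E y) by (exists (RInt f 1 2), 1, 2; repeat split; lra).
  destruct (completeness E Ebound Ene) as [l [Hub Hlub]].
  assert (Hle : forall a b, 0 < a -> a <= b -> RInt f a b <= l) by (intros a b Ha Hab; apply Hub; exists a, b; auto).
  exists l. split; auto.
  intros P [eps HP].
  assert (Hnear : exists a0 b0, 0 < a0 /\ a0 <= b0 /\ l - eps < RInt f a0 b0).
  { apply NNPP. intros Hfar. assert (l <= l - eps); [| destruct eps; simpl in *; lra].
    apply Hlub. intros y (a & b & Ha & Hab & ->).
    apply Rnot_lt_le. intros Hlt. apply Hfar. exists a, b. auto. }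
  destruct Hnear as (a0 & b0 & Ha0 & Hab0 & Hl).
  apply Filter_prod with (fun a => 0 < a < a0) (fun b => b0 < b).
  - apply at_right_0_lt; auto.
  - exists b0; auto.
  - intros a b Ha Hb. exists (RInt f a b). split.
    + apply (@RInt_correct R_CompleteNormedModule), ex_RInt_pos; simpl; lra.
    + apply HP. change (Rabs (RInt f a b - l) < eps).
      pose proof (Hle a b ltac:(lra) ltac:(lra)).
      pose proof (RInt_le_widen a a0 b0 b ltac:(lra) ltac:(lra) Hab0 ltac:(lra)).
      apply Rabs_def1; lra.
Qed.

End Improper.

Lemma RInt_0_infty_pos_of_dominated f C1 C2 c : -1 < c ->
  (forall t, 0 < t -> continuous f t) ->
  (forall t, 0 < t -> 0 < f t) ->
  (forall t, 0 < t <= 1 -> f t <= C1 * Rpower t c) ->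
  (forall t, 1 <= t -> f t <= C2 * exp (- t / 2)) ->
  is_RInt_0_infty f (RInt_0_infty f) /\ 0 < RInt_0_infty f.
Proof.
  intros Hc f_cont f_pos Hsmall Hlarge.
  assert (f_ge0 : forall t, 0 < t -> 0 <= f t) by (intros; left; auto).
  destruct (is_RInt_0_infty_sup f f_cont f_ge0 _
              (RInt_le_of_dominated f f_cont f_ge0 C1 C2 c Hc Hsmall Hlarge)) as [l [Hl Hle]].
  rewrite (is_RInt_gen_unique f l Hl). split; auto.
  apply Rlt_le_trans with (RInt f 1 2); [| apply Hle; lra].
  apply RInt_gt_0; [lra | intros; apply f_pos; lra | intros; apply f_cont; lra].
Qed.

Lemma is_RInt_0_infty_abs_le f g lf lg : (forall t, 0 < t -> Rabs (f t) <= g t) ->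
  is_RInt_0_infty f lf -> is_RInt_0_infty g lg -> Rabs lf <= lg.
Proof.
  intros Hfg Hf Hg.
  apply (@RInt_gen_norm R_CompleteNormedModule (at_right 0) (Rbar_locally p_infty) _ _ f g);
    [| | exact Hf | exact Hg].
  - eapply filter_imp; [| exact eventually_0_lt_le]. intros ab []; auto.
  - eapply filter_imp; [| exact eventually_0_lt_le]. intros ab [Ha _] t Ht. apply Hfg. lra.
Qed.

Definition gamma_integrand (s t : R) : R := Rpower t (s - 1) * exp (- t).

Lemma gamma_integrand_le_small s t : 0 < t -> gamma_integrand s t <= Rpower t (s - 1).
Proof.
  intros Ht. unfold gamma_integrand. rewrite <- (Rmult_1_r (Rpower t (s - 1))) at 2.
  apply Rmult_le_compat_l; [left; apply Rpower_pos |].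
  rewrite <- exp_0. apply exp_le. lra.
Qed.

Lemma gamma_integrand_le_large s t : 1 <= t ->
  gamma_integrand s t <= exp (Rabs (s - 1) * ln (2 * Rabs (s - 1) + 1)) * exp (- t / 2).
Proof.
  intros Ht. unfold gamma_integrand, Rpower. rewrite <- !exp_plus. apply exp_le.
  set (c := s - 1). set (m := 2 * Rabs c + 1).
  assert (Hm : 1 <= m) by (unfold m; pose proof (Rabs_pos c); lra).
  assert (Hlnt : 0 <= ln t) by (rewrite <- ln_1; apply ln_le; lra).
  assert (Hlnm : 0 <= ln m) by (rewrite <- ln_1; apply ln_le; lra).
  (* [ln t <= t/m + ln m] with [m] large enough that [|c| t / m <= t / 2] *)
  assert (H1 : ln (t / m) <= t / m - 1) by (apply ln_le_sub_1, Rdiv_lt_0_compat; lra).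
  rewrite ln_div in H1 by lra.
  assert (c * ln t <= Rabs c * ln t) by (apply Rmult_le_compat_r; [auto | apply Rle_abs]).
  assert (Rabs c * ln t <= Rabs c * (t / m + ln m)) by (apply Rmult_le_compat_l; [apply Rabs_pos | lra]).
  assert (Rabs c * (t / m) <= t / 2).
  { unfold m. pose proof (Rabs_pos c). apply (Rmult_le_reg_r (2 * Rabs c + 1)); [lra |].
    field_simplify; [nra | lra]. }
  nra.
Qed.

Lemma gamma_integrand_continuous s t : 0 < t -> continuous (gamma_integrand s) t.
Proof.
  intros Ht. apply (@ex_derive_continuous R_AbsRing R_NormedModule).
  eexists. apply (is_derive_mult (fun t => Rpower t (s - 1)) (fun t => exp (- t))).
  - apply is_derive_Reals, derivable_pt_lim_power; auto.
  - auto_derive; auto.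
  - intros; apply Rmult_comm.
Qed.

Lemma Gamma_fn_pos s : 0 < s -> 0 < Gamma_fn s.
Proof.
  intros Hs.
  apply (RInt_0_infty_pos_of_dominated (gamma_integrand s) 1
           (exp (Rabs (s - 1) * ln (2 * Rabs (s - 1) + 1))) (s - 1)).
  - lra.
  - apply gamma_integrand_continuous.
  - intros t Ht. apply Rmult_lt_0_compat; [apply Rpower_pos | apply exp_pos].
  - intros t Ht. rewrite Rmult_1_l. apply gamma_integrand_le_small; lra.
  - apply gamma_integrand_le_large.
Qed.

Definition kernel (q w t : R) : R := Rpower t (q - 1) * exp (- t ^ 2 / 2 - w * t).

Definition Kint (q w : R) : R := RInt_0_infty (kernel q w).

Lemma kernel_pos q w t : 0 < kernel q w t.
Proof. apply Rmult_lt_0_compat; apply exp_pos. Qed.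

Lemma kernel_succ q w t : 0 < t -> kernel (q + 1) w t = t * kernel q w t.
Proof.
  intros Ht. unfold kernel. replace (q + 1 - 1) with (q - 1 + 1) by ring.
  rewrite Rpower_plus, Rpower_1 by auto. ring.
Qed.

Lemma kernel_shift q w h t : kernel q (w + h) t = kernel q w t * exp (- h * t).
Proof. unfold kernel. rewrite Rmult_assoc, <- exp_plus. do 2 f_equal. ring. Qed.

(* [- t^2/2 - w t = - t - (t - (1 - w))^2/2 + (1 - w)^2/2] *)
Lemma kernel_le_gamma_integrand q w t :
  kernel q w t <= exp ((1 - w) ^ 2 / 2) * gamma_integrand q t.
Proof.
  unfold kernel, gamma_integrand.
  replace (exp ((1 - w) ^ 2 / 2) * (Rpower t (q - 1) * exp (- t)))
    with (Rpower t (q - 1) * exp ((1 - w) ^ 2 / 2 + - t)) by (rewrite exp_plus; ring).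
  apply Rmult_le_compat_l; [left; apply Rpower_pos |].
  apply exp_le. pose proof (pow2_ge_0 (t - (1 - w))). simpl in *. lra.
Qed.

Lemma kernel_is_derive q w t : 0 < t ->
  is_derive (kernel (q + 1) w) t (q * kernel q w t - kernel (q + 2) w t - w * kernel (q + 1) w t).
Proof.
  intros Ht.
  evar (D : R).
  replace (q * kernel q w t - kernel (q + 2) w t - w * kernel (q + 1) w t) with D.
  - apply (is_derive_mult (fun t => Rpower t (q + 1 - 1)) (fun t => exp (- t ^ 2 / 2 - w * t))).
    + apply is_derive_Reals, derivable_pt_lim_power; auto.
    + auto_derive; auto.
    + intros; apply Rmult_comm.
  - unfold D, kernel, plus, mult; simpl.
    replace (q + 2 - 1) with (q - 1 + 1 + 1) by ring.
    replace (q + 1 - 1 - 1) with (q - 1) by ring.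
    replace (q + 1 - 1) with (q - 1 + 1) by ring.
    rewrite !Rpower_plus, !Rpower_1 by auto. unfold Rdiv, Rminus. field.
Qed.

Lemma kernel_continuous q w t : 0 < t -> continuous (kernel q w) t.
Proof.
  intros Ht. apply (@ex_derive_continuous R_AbsRing R_NormedModule).
  replace q with (q - 1 + 1) by ring. eexists. apply kernel_is_derive; auto.
Qed.

Lemma Kint_spec q w : 0 < q -> is_RInt_0_infty (kernel q w) (Kint q w) /\ 0 < Kint q w.
Proof.
  intros Hq. set (E := exp ((1 - w) ^ 2 / 2)). assert (HE : 0 < E) by apply exp_pos.
  apply (RInt_0_infty_pos_of_dominated _ E
           (E * exp (Rabs (q - 1) * ln (2 * Rabs (q - 1) + 1))) (q - 1)).
  - lra.
  - apply kernel_continuous.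
  - intros; apply kernel_pos.
  - intros t Ht. eapply Rle_trans; [apply kernel_le_gamma_integrand |].
    apply Rmult_le_compat_l; [lra | apply gamma_integrand_le_small; lra].
  - intros t Ht. eapply Rle_trans; [apply kernel_le_gamma_integrand |].
    rewrite Rmult_assoc. apply Rmult_le_compat_l; [lra | apply gamma_integrand_le_large; lra].
Qed.

Lemma is_RInt_Kint q w : 0 < q -> is_RInt_0_infty (kernel q w) (Kint q w).
Proof. apply Kint_spec. Qed.

Lemma Kint_pos q w : 0 < q -> 0 < Kint q w.
Proof. apply Kint_spec. Qed.

Lemma kernel_taylor1_le q w h t : 0 < t -> Rabs h <= 1 ->
  Rabs (kernel q (w + h) t - kernel q w t + h * kernel (q + 1) w t)
  <= h ^ 2 * kernel (q + 2) (w - 1) t.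
Proof.
  intros Ht Hh.
  replace (q + 2) with (q + 1 + 1) by ring. rewrite !kernel_succ, kernel_shift by auto.
  replace (w - 1) with (w + - 1) by ring. rewrite kernel_shift.
  pose proof (kernel_pos q w t) as Hk.
  replace (kernel q w t * exp (- h * t) - kernel q w t + h * (t * kernel q w t))
    with (kernel q w t * (exp (- h * t) - 1 - - h * t)) by ring.
  rewrite Rabs_mult, (Rabs_right (kernel q w t)) by lra.
  pose proof (exp_taylor1_le (- h * t)) as Htaylor.
  assert (exp (Rabs (- h * t)) <= exp (- -1 * t)).
  { apply exp_le. rewrite Rabs_mult, (Rabs_right t), Rabs_Ropp by lra. nra. }
  assert (0 <= (- h * t) ^ 2) by apply pow2_ge_0.
  replace (h ^ 2 * (t * (t * (kernel q w t * exp (- -1 * t)))))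
    with (kernel q w t * ((- h * t) ^ 2 * exp (- -1 * t))) by ring.
  apply Rmult_le_compat_l; [lra |]. nra.
Qed.

Lemma Kint_is_derive (q w : R) : 0 < q -> is_derive (Kint q) w (- Kint (q + 1) w).
Proof.
  intros Hq. apply is_derive_of_quadratic_remainder with (C := Kint (q + 2) (w - 1)).
  intros h Hh.
  assert (Hq1 : 0 < q + 1) by lra. assert (Hq2 : 0 < q + 2) by lra.
  pose proof (is_RInt_gen_plus _ _ _ _
    (is_RInt_gen_minus _ _ _ _ (is_RInt_Kint q (w + h) Hq) (is_RInt_Kint q w Hq))
    (is_RInt_gen_scal _ h _ (is_RInt_Kint (q + 1) w Hq1))) as Hdiff.
  pose proof (is_RInt_gen_scal _ (h ^ 2) _ (is_RInt_Kint (q + 2) (w - 1) Hq2)) as Hbound.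
  replace (Kint q (w + h) - Kint q w - h * - Kint (q + 1) w)
    with (Kint q (w + h) - Kint q w + h * Kint (q + 1) w) by ring.
  apply (is_RInt_0_infty_abs_le _ _ _ _ (fun t Ht => kernel_taylor1_le q w h t Ht Hh) Hdiff Hbound).
Qed.

Lemma kernel_lim_0 q w : 1 < q -> filterlim (kernel q w) (at_right 0) (locally 0).
Proof.
  intros Hq. set (E := exp ((1 - w) ^ 2 / 2)).
  apply (filterlim_le_le (fun _ => 0) _ (fun t => E * Rpower t (q - 1)) (Finite 0)).
  - exists (mkposreal 1 Rlt_0_1). intros t _ Ht. split; [left; apply kernel_pos |].
    eapply Rle_trans; [apply kernel_le_gamma_integrand |].
    apply Rmult_le_compat_l; [left; apply exp_pos | apply gamma_integrand_le_small; lra].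
  - apply filterlim_const.
  - apply filterlim_scal_0, filterlim_Rpower_0; [apply at_right_proper_filter | lra].
Qed.

Lemma kernel_lim_infty q w : filterlim (kernel q w) (Rbar_locally p_infty) (locally 0).
Proof.
  set (E := exp ((1 - w) ^ 2 / 2)). set (G := exp (Rabs (q - 1) * ln (2 * Rabs (q - 1) + 1))).
  apply (filterlim_le_le (fun _ => 0) _ (fun t => E * G * exp (- t / 2)) (Finite 0)).
  - exists 1. intros t Ht. split; [left; apply kernel_pos |].
    eapply Rle_trans; [apply kernel_le_gamma_integrand |].
    rewrite Rmult_assoc. apply Rmult_le_compat_l; [left; apply exp_pos |].
    apply gamma_integrand_le_large. lra.
  - apply filterlim_const.
  - apply filterlim_scal_0, filterlim_exp_neg_half. apply Rbar_locally_filter.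
Qed.

Lemma Kint_recurrence q w : 0 < q -> Kint (q + 2) w = q * Kint q w - w * Kint (q + 1) w.
Proof.
  intros Hq. assert (Hq1 : 0 < q + 1) by lra. assert (Hq2 : 0 < q + 2) by lra.
  set (g t := q * kernel q w t - kernel (q + 2) w t - w * kernel (q + 1) w t).
  assert (Hderive : forall t, 0 < t -> is_derive (kernel (q + 1) w) t (g t))
    by (intros; apply kernel_is_derive; auto).
  assert (Hg_cont : forall t, 0 < t -> continuous g t).
  { intros t Ht. unfold g.
    apply (@continuous_minus R_UniformSpace R_AbsRing R_NormedModule);
      [apply (@continuous_minus R_UniformSpace R_AbsRing R_NormedModule) |];
      try apply (@continuous_scal_r R_UniformSpace R_AbsRing R_NormedModule);
      apply kernel_continuous; auto. }
  assert (Hboundary : is_RInt_0_infty g (0 - 0)).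
  { apply (is_RInt_gen_ext (Derive (kernel (q + 1) w))).
    - eapply filter_imp; [| exact eventually_0_lt_le]. intros [a b] [Ha Hab] t Ht; simpl in *.
      apply is_derive_unique, Hderive. revert Ht; apply Rmin_case; lra.
    - apply is_RInt_gen_Derive.
      + eapply filter_imp; [| exact eventually_0_lt_le]. intros [a b] [Ha Hab] t Ht; simpl in *.
        eexists. apply Hderive. rewrite Rmin_left in Ht; lra.
      + eapply filter_imp; [| exact eventually_0_lt_le]. intros [a b] [Ha Hab] t Ht; simpl in *.
        rewrite Rmin_left in Ht by lra.
        apply (continuous_ext_loc _ g); [| apply Hg_cont; lra].
        apply (locally_interval _ t 0 p_infty); simpl; auto; try lra.
        intros y Hy _. symmetry. apply is_derive_unique, Hderive; auto.
      + apply kernel_lim_0; lra.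
      + apply kernel_lim_infty. }
  assert (Hlinear : is_RInt_0_infty g (q * Kint q w - Kint (q + 2) w - w * Kint (q + 1) w)).
  { exact (is_RInt_gen_minus _ _ _ _
      (is_RInt_gen_minus _ _ _ _ (is_RInt_gen_scal _ q _ (is_RInt_Kint q w Hq))
         (is_RInt_Kint (q + 2) w Hq2))
      (is_RInt_gen_scal _ w _ (is_RInt_Kint (q + 1) w Hq1))). }
  pose proof (is_RInt_gen_unique _ _ Hboundary) as E0.
  pose proof (is_RInt_gen_unique _ _ Hlinear) as E1. lra.
Qed.

Lemma Kint_log_convex q w : 0 < q -> Kint (q + 1) w ^ 2 <= Kint q w * Kint (q + 2) w.
Proof.
  intros Hq. assert (Hq1 : 0 < q + 1) by lra. assert (Hq2 : 0 < q + 2) by lra.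
  set (K0 := Kint q w). set (K1 := Kint (q + 1) w). set (K2 := Kint (q + 2) w).
  set (c := K1 / K0).
  assert (HK0 : 0 < K0) by (apply Kint_pos; auto).
  (* the integral of [(t - c)^2 * kernel q w t] is [K2 - 2 c K1 + c^2 K0] *)
  assert (Hsquare : 0 <= K2 - 2 * c * K1 + c ^ 2 * K0).
  { pose proof (is_RInt_gen_plus _ _ _ _
      (is_RInt_gen_minus _ _ _ _ (is_RInt_Kint (q + 2) w Hq2)
         (is_RInt_gen_scal _ (2 * c) _ (is_RInt_Kint (q + 1) w Hq1)))
      (is_RInt_gen_scal _ (c ^ 2) _ (is_RInt_Kint q w Hq))) as Hsq.
    pose proof (is_RInt_gen_scal _ 0 _ (is_RInt_Kint q w Hq)) as Hzero.
    refine (Rle_trans _ _ _ (Rabs_pos _) (is_RInt_0_infty_abs_le _ _ _ _ _ Hzero Hsq)).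
    intros t Ht. change (Rabs (0 * kernel q w t)
      <= kernel (q + 2) w t - 2 * c * kernel (q + 1) w t + c ^ 2 * kernel q w t).
    replace (q + 2) with (q + 1 + 1) by ring. rewrite !kernel_succ by auto.
    rewrite Rmult_0_l, Rabs_R0.
    replace (t * (t * kernel q w t) - 2 * c * (t * kernel q w t) + c ^ 2 * kernel q w t)
      with ((t - c) ^ 2 * kernel q w t) by ring.
    apply Rmult_le_pos; [apply pow2_ge_0 | left; apply kernel_pos]. }
  unfold c in Hsquare.
  apply (Rmult_le_compat_l K0) in Hsquare; [| lra].
  replace (K0 * (K2 - 2 * (K1 / K0) * K1 + (K1 / K0) ^ 2 * K0)) with (K0 * K2 - K1 ^ 2)
    in Hsquare by (field; lra).
  lra.
Qed.

Lemma Kint_ratio_is_derive q w : 0 < q ->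
  is_derive (fun w => Kint q w / Kint (q + 1) w) w
    ((Kint q w * Kint (q + 2) w - Kint (q + 1) w ^ 2) / Kint (q + 1) w ^ 2).
Proof.
  intros Hq.
  replace (Kint q w * Kint (q + 2) w - Kint (q + 1) w ^ 2)
    with (- Kint (q + 1) w * Kint (q + 1) w - Kint q w * - Kint (q + 1 + 1) w)
    by (replace (q + 1 + 1) with (q + 2) by ring; ring).
  apply is_derive_div; [apply Kint_is_derive; lra .. |].
  apply Rgt_not_eq, Kint_pos. lra.
Qed.

Definition Kint_ratio_slope q w :=
  (Kint q w * Kint (q + 1) w + w * (Kint (q + 1) w ^ 2 - Kint q w * Kint (q + 2) w))
  / Kint (q + 1) w ^ 2.

Lemma Kint_ratio_slope_pos q w : 0 < q -> 0 < Kint_ratio_slope q w.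
Proof.
  intros Hq. unfold Kint_ratio_slope.
  set (K0 := Kint q w). set (K1 := Kint (q + 1) w).
  set (K2 := Kint (q + 2) w). set (K3 := Kint (q + 3) w).
  assert (HK0 : 0 < K0) by (apply Kint_pos; lra).
  assert (HK1 : 0 < K1) by (apply Kint_pos; lra).
  assert (HK2 : 0 < K2) by (apply Kint_pos; lra).
  apply Rdiv_lt_0_compat; [| apply pow_lt; auto].
  destruct (Rle_or_lt w 0) as [Hw | Hw].
  - pose proof (Kint_log_convex q w Hq) as Hconvex0. fold K0 K1 K2 in Hconvex0. nra.
  - assert (Hrec0 : K2 = q * K0 - w * K1) by (apply Kint_recurrence; auto).
    assert (Hrec1 : K3 = (q + 1) * K1 - w * K2).
    { unfold K3, K2, K1. replace (q + 3) with (q + 1 + 2) by ring.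
      replace (q + 2) with (q + 1 + 1) by ring. apply Kint_recurrence; lra. }
    assert (Hconvex1 : K2 ^ 2 <= K1 * K3).
    { unfold K3, K2, K1. replace (q + 3) with (q + 1 + 2) by ring.
      replace (q + 2) with (q + 1 + 1) by ring. apply Kint_log_convex; lra. }
    assert (Hid : q * (K0 * K1 + w * (K1 ^ 2 - K0 * K2)) = w * (K1 * K3 - K2 ^ 2) + K1 * K2)
      by (rewrite Hrec1, Hrec0; ring).
    assert (0 < q * (K0 * K1 + w * (K1 ^ 2 - K0 * K2))) by nra.
    nra.
Qed.

Definition psi_arg (b a s y : R) : R := - (b * y - a) / (s * b) * sqrt (2 * b).

Lemma Dpc_eq_Kint beta x : Dpc beta x = exp (- x ^ 2 / 4) / Gamma_fn (- beta) * Kint (- beta) x.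
Proof. reflexivity. Qed.

Section Psi.

Variables b rho a : R.
Hypothesis b_pos : 0 < b.
Hypothesis rho_pos : 0 < rho.

Local Notation nu := (- (- rho / b)).

Lemma nu_pos : 0 < nu.
Proof. replace nu with (rho / b) by (field; lra). apply Rdiv_lt_0_compat; auto. Qed.

Lemma psi_arg_sq s y : s <> 0 -> psi_arg b a s y ^ 2 / 4 = (b * y - a) ^ 2 / (2 * s ^ 2 * b).
Proof.
  intros Hs. unfold psi_arg.
  replace ((- (b * y - a) / (s * b) * sqrt (2 * b)) ^ 2)
    with ((b * y - a) ^ 2 / (s * b) ^ 2 * (sqrt (2 * b) * sqrt (2 * b))) by (field; split; lra).
  rewrite sqrt_sqrt by lra. field. split; lra.
Qed.

Lemma psi_eq_Kint s y : s <> 0 -> psi b rho y a s = Kint nu (psi_arg b a s y) / Gamma_fn nu.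
Proof.
  intros Hs. unfold psi. rewrite Dpc_eq_Kint.
  change (- (b * y - a) / (s * b) * sqrt (2 * b)) with (psi_arg b a s y).
  replace (- psi_arg b a s y ^ 2 / 4) with (- ((b * y - a) ^ 2 / (2 * s ^ 2 * b)))
    by (rewrite <- psi_arg_sq by auto; field).
  rewrite exp_Ropp. field.
  split; [apply Rgt_not_eq, Gamma_fn_pos, nu_pos | apply Rgt_not_eq, exp_pos].
Qed.

Lemma psi_arg_is_derive_y s y : s <> 0 ->
  is_derive (fun y => psi_arg b a s y) y (- (sqrt (2 * b) / s)).
Proof. intros Hs. unfold psi_arg. auto_derive; auto. field. split; lra. Qed.

Lemma psi_arg_is_derive_s s y : s <> 0 ->
  is_derive (fun s => psi_arg b a s y) s (- psi_arg b a s y / s).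
Proof.
  intros Hs. unfold psi_arg. auto_derive.
  - apply Rmult_integral_contrapositive_currified; lra.
  - field. split; lra.
Qed.

Lemma psi_k_eq_Kint n s y : s <> 0 ->
  psi_k b rho n y a s = (sqrt (2 * b) / s) ^ n * Kint (nu + INR n) (psi_arg b a s y) / Gamma_fn nu.
Proof.
  intros Hs. unfold psi_k. revert y. induction n as [| n IH]; intros y.
  - simpl. rewrite psi_eq_Kint, Rplus_0_r by auto. field.
    apply Rgt_not_eq, Gamma_fn_pos, nu_pos.
  - simpl Derive_n.
    set (c := sqrt (2 * b) / s). set (G := Gamma_fn nu).
    assert (HG : G <> 0) by (apply Rgt_not_eq, Gamma_fn_pos, nu_pos).
    rewrite (Derive_ext _ (fun y => c ^ n / G * Kint (nu + INR n) (psi_arg b a s y)))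
      by (intros t; rewrite IH; unfold c, G; field; auto).
    apply is_derive_unique.
    replace (c ^ S n * Kint (nu + INR (S n)) (psi_arg b a s y) / G)
      with (c ^ n / G * (- c * - Kint (nu + INR n + 1) (psi_arg b a s y)))
      by (rewrite S_INR, Rplus_assoc; simpl; field; auto).
    apply is_derive_scal.
    apply (is_derive_comp (Kint (nu + INR n)) (fun y => psi_arg b a s y)).
    + apply Kint_is_derive. pose proof nu_pos. pose proof (pos_INR n). lra.
    + apply psi_arg_is_derive_y; auto.
Qed.

Lemma psi_k_ratio_eq k s y : 0 < s ->
  psi_k b rho k y a s / psi_k b rho (S k) y a s
  = s / sqrt (2 * b)
    * (Kint (nu + INR k) (psi_arg b a s y) / Kint (nu + INR k + 1) (psi_arg b a s y)).
Proof.
  intros Hs. rewrite !psi_k_eq_Kint, S_INR, <- Rplus_assoc by lra.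
  pose proof nu_pos. pose proof (pos_INR k).
  assert (0 < Kint (nu + INR k + 1) (psi_arg b a s y)) by (apply Kint_pos; lra).
  assert (0 < sqrt (2 * b)) by (apply sqrt_lt_R0; lra).
  assert (0 < Gamma_fn nu) by (apply Gamma_fn_pos; auto).
  assert (0 < (sqrt (2 * b) / s) ^ k) by (apply pow_lt, Rdiv_lt_0_compat; auto).
  simpl. field. repeat split; lra.
Qed.

Lemma psi_k_ratio_is_derive k x sigma : 0 < sigma ->
  is_derive (fun s => psi_k b rho k x a s / psi_k b rho (S k) x a s) sigma
    (Kint_ratio_slope (nu + INR k) (psi_arg b a sigma x) / sqrt (2 * b)).
Proof.
  intros Hsigma. set (p := nu + INR k).
  assert (Hp : 0 < p) by (pose proof nu_pos; pose proof (pos_INR k); unfold p; lra).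
  assert (Hsqrt : 0 < sqrt (2 * b)) by (apply sqrt_lt_R0; lra).
  set (ratio w := Kint p w / Kint (p + 1) w).
  apply (is_derive_ext_loc (fun s => s / sqrt (2 * b) * ratio (psi_arg b a s x))).
  { apply (locally_interval _ sigma 0 p_infty); simpl; auto.
    intros s Hs _. symmetry. apply psi_k_ratio_eq; auto. }
  set (w := psi_arg b a sigma x).
  assert (HK1 : 0 < Kint (p + 1) w) by (apply Kint_pos; lra).
  replace (Kint_ratio_slope p w / sqrt (2 * b))
    with (/ sqrt (2 * b) * ratio w
          + sigma / sqrt (2 * b) * (- w / sigma
              * ((Kint p w * Kint (p + 2) w - Kint (p + 1) w ^ 2) / Kint (p + 1) w ^ 2)))
    by (unfold Kint_ratio_slope, ratio; field; repeat split; lra).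
  apply (is_derive_mult (fun s => s / sqrt (2 * b)) (fun s => ratio (psi_arg b a s x))).
  - auto_derive; [lra | field; lra].
  - apply (is_derive_comp ratio (fun s => psi_arg b a s x)).
    + fold w. exact (Kint_ratio_is_derive p w Hp).
    + apply psi_arg_is_derive_s; lra.
  - intros; apply Rmult_comm.
Qed.

Lemma psi_k_derivative_formula k x sigma : 0 < sigma ->
  ((a - b * x) * (psi_k b rho (S k) x a sigma ^ 2
                  - psi_k b rho k x a sigma * psi_k b rho (S (S k)) x a sigma)
   + b * psi_k b rho (S k) x a sigma * psi_k b rho k x a sigma)
  / (b * sigma * psi_k b rho (S k) x a sigma ^ 2)
  = Kint_ratio_slope (nu + INR k) (psi_arg b a sigma x) / sqrt (2 * b).
Proof.
  intros Hsigma. rewrite !psi_k_eq_Kint, !S_INR by lra.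
  set (p := nu + INR k). set (w := psi_arg b a sigma x).
  replace (nu + (INR k + 1)) with (p + 1) by (unfold p; ring).
  replace (nu + (INR k + 1 + 1)) with (p + 2) by (unfold p; ring).
  assert (Hp : 0 < p) by (pose proof nu_pos; pose proof (pos_INR k); unfold p; lra).
  assert (0 < Kint (p + 1) w) by (apply Kint_pos; lra).
  assert (0 < sqrt (2 * b)) by (apply sqrt_lt_R0; lra).
  assert (0 < Gamma_fn nu) by (apply Gamma_fn_pos, nu_pos).
  assert (0 < (sqrt (2 * b) / sigma) ^ k) by (apply pow_lt, Rdiv_lt_0_compat; auto).
  assert (Hw : a - b * x = w * sigma * b / sqrt (2 * b))
    by (unfold w, psi_arg; field; repeat split; lra).
  rewrite Hw. unfold Kint_ratio_slope. simpl pow. field. repeat split; lra.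
Qed.

End Psi.

Theorem lemma5p4 (b rho a sigma : R) (k : nat) (x : R) :
  0 < b -> 0 < rho -> 0 < sigma ->
  is_derive (fun s => psi_k b rho k x a s / psi_k b rho (S k) x a s) sigma
    (((a - b * x) * (psi_k b rho (S k) x a sigma ^ 2
                     - psi_k b rho k x a sigma * psi_k b rho (S (S k)) x a sigma)
      + b * psi_k b rho (S k) x a sigma * psi_k b rho k x a sigma)
     / (b * sigma * psi_k b rho (S k) x a sigma ^ 2))
  /\
  0 < ((a - b * x) * (psi_k b rho (S k) x a sigma ^ 2
                      - psi_k b rho k x a sigma * psi_k b rho (S (S k)) x a sigma)
       + b * psi_k b rho (S k) x a sigma * psi_k b rho k x a sigma)
      / (b * sigma * psi_k b rho (S k) x a sigma ^ 2).
Proof.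
  intros Hb Hrho Hsigma.
  rewrite psi_k_derivative_formula by auto.
  split.
  - apply psi_k_ratio_is_derive; auto.
  - apply Rdiv_lt_0_compat; [| apply sqrt_lt_R0; lra].
    apply Kint_ratio_slope_pos. pose proof (nu_pos b rho Hb Hrho). pose proof (pos_INR k). lra.
Qed.
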